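(* Let $E$ be a disjoint combination of $E_1,\dots,E_n$ and fix $i$. If $M$ and $N$ are quasi-$E_i$ terms and $F_{E_i}(M)\to^*_{R_E}F_{E_i}(N)$, then $M\to^*_{R_E}N$.
   Context: Fix names, variables, and constructors $\mathsf{pub},\mathsf{sign},\mathsf{blind},\langle\cdot,\cdot\rangle,\{\cdot\}_\cdot$. $E_1,\dots,E_n$ are equational theories with pairwise disjoint signatures $\Sigma_{E_i}$ (disjoint from the constructors), each containing at most one associative-commutative (AC) binary symbol $\oplus_i$ and each AC-convergent; $E$ is their union, presented by the rewrite system $R_E$ (the union of the individual rewrite systems) which is terminating and confluent modulo AC of all $\oplus_i$; $\to_{R_E}$ is one rewrite step modulo AC (applicable also to terms containing variables), $\to^*_{R_E}$ its reflexive-transitive closure; $\approx_E$ is equality modulo $E$. Terms are built from names, variables, the constructors and symbols of $\Sigma_E=\bigcup_i\Sigma_{E_i}$; $M,N$ here are ground. A term is $E_i$-alien if its head symbol is not in $\Sigma_{E_i}$. A term $M$ is a quasi-$E_i$ term if every $E_i$-alien subterm of $M$ is in $E$-normal form. Fix a function $v_E$ assigning to each ground term a variable such that $v_E(M)=v_E(N)$ iff $M\approx_E N$. The $E_i$ abstraction function $F_{E_i}$ on ground terms: $F_{E_i}(u)=u$ if $u$ is a name; $F_{E_i}(g(u_1,\dots,u_k))=g(F_{E_i}(u_1),\dots,F_{E_i}(u_k))$ if $g\in\Sigma_{E_i}$; $F_{E_i}(u)=v_E(u)$ otherwise. *)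

From Stdlib Require Import List Relations Arith.
Import ListNotations.
Set Implicit Arguments.

Inductive ctor := CPub | CSign | CBlind | CPair | CEnc.
Definition carity (c : ctor) : nat := match c with CPub => 1 | _ => 2 end.

(* Terms over names (nat), variables (nat), the constructors, and the
   symbols of Sigma_E (an arbitrary type S). *)
Inductive term (S : Type) : Type :=
| TName : nat -> term S
| TVar : nat -> term S
| TCon : ctor -> list (term S) -> term S
| TApp : S -> list (term S) -> term S.
Arguments TName {S}. Arguments TVar {S}. Arguments TCon {S}. Arguments TApp {S}.

Inductive subterm {S : Type} : term S -> term S -> Prop :=
| sub_refl t : subterm t t
| sub_con u c l t : In t l -> subterm u t -> subterm u (TCon c l)
| sub_app u f l t : In t l -> subterm u t -> subterm u (TApp f l).

Fixpoint subst {S : Type} (sg : nat -> term S) (t : term S) : term S :=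
  match t with
  | TName a => TName a
  | TVar x => sg x
  | TCon c l => TCon c (map (subst sg) l)
  | TApp f l => TApp f (map (subst sg) l)
  end.

Inductive ctx {S : Type} (r : relation (term S)) : relation (term S) :=
| ctx_root s t : r s t -> ctx r s t
| ctx_con c l1 s t l2 : ctx r s t ->
    ctx r (TCon c (l1 ++ s :: l2)) (TCon c (l1 ++ t :: l2))
| ctx_app f l1 s t l2 : ctx r s t ->
    ctx r (TApp f (l1 ++ s :: l2)) (TApp f (l1 ++ t :: l2)).

Definition ac_ax {S : Type} (P : S -> Prop) : relation (term S) :=
  fun s t => exists f a b c, P f /\
    ((s = TApp f [a; TApp f [b; c]] /\ t = TApp f [TApp f [a; b]; c]) \/
     (s = TApp f [TApp f [a; b]; c] /\ t = TApp f [a; TApp f [b; c]]) \/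
     (s = TApp f [a; b] /\ t = TApp f [b; a])).

Definition ac_eq {S : Type} (P : S -> Prop) : relation (term S) :=
  clos_refl_trans _ (ctx (ac_ax P)).

Definition rule_inst {S : Type} (R : term S * term S -> Prop) : relation (term S) :=
  fun s t => exists l r sg, R (l, r) /\ s = subst sg l /\ t = subst sg r.

Definition step_mod {S : Type} (P : S -> Prop) (R : term S * term S -> Prop)
  : relation (term S) :=
  fun s t => exists s' t', ac_eq P s s' /\ ctx (rule_inst R) s' t' /\ ac_eq P t' t.

Definition rstar_mod {S : Type} (P : S -> Prop) (R : term S * term S -> Prop)
  : relation (term S) :=
  clos_refl_trans _ (fun s t => step_mod P R s t \/ ac_eq P s t).

Definition normal_mod {S : Type} (P : S -> Prop) (R : term S * term S -> Prop)
  (s : term S) : Prop := forall t, ~ step_mod P R s t.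

Definition wf {S : Type} (ar : S -> nat) (t : term S) : Prop :=
  forall u, subterm u t ->
    match u with
    | TCon c l => length l = carity c
    | TApp f l => length l = ar f
    | _ => True
    end.

Definition pure {S : Type} (th : S -> nat) (j : nat) (t : term S) : Prop :=
  forall u, subterm u t ->
    match u with
    | TVar _ => True
    | TApp f _ => th f = j
    | _ => False
    end.

Definition ground {S : Type} (t : term S) : Prop := forall x, ~ subterm (TVar x) t.

Definition rewrite_rule {S : Type} (ar th : S -> nat) (j : nat)
  (lr : term S * term S) : Prop :=
  let (l, r) := lr in
  wf ar l /\ wf ar r /\ pure th j l /\ pure th j r /\
  (forall x, l <> TVar x) /\
  (forall x, subterm (TVar x) r -> subterm (TVar x) l).

Definition convergent_mod {S : Type} (P : S -> Prop) (R : term S * term S -> Prop)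
  (D : term S -> Prop) : Prop :=
  (forall t, D t -> Acc (fun u v => step_mod P R v u) t) /\
  (forall t u v, D t -> rstar_mod P R t u -> rstar_mod P R t v ->
     exists w1 w2, rstar_mod P R u w1 /\ rstar_mod P R v w2 /\ ac_eq P w1 w2).

Definition RE {S : Type} (n : nat) (R : nat -> term S * term S -> Prop)
  : term S * term S -> Prop :=
  fun lr => exists j, j < n /\ R j lr.

(* E is a disjoint combination of E_0, ..., E_{n-1}:
   th f = index of the theory whose signature contains f (so signatures are
   pairwise disjoint, and disjoint from the constructors by construction);
   isac f = f is an AC symbol; R j = rewrite system of E_j. *)
Definition disjoint_combination {S : Type} (ar th : S -> nat) (isac : S -> Prop)
  (n : nat) (R : nat -> term S * term S -> Prop) : Prop :=
  (forall f, th f < n) /\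
  (forall f, isac f -> ar f = 2) /\
  (forall f g, isac f -> isac g -> th f = th g -> f = g) /\
  (forall j lr, R j lr -> j < n /\ rewrite_rule ar th j lr) /\
  (forall j, j < n ->
     convergent_mod (fun f => isac f /\ th f = j) (R j)
                    (fun t => wf ar t /\ pure th j t)) /\
  convergent_mod isac (RE n R) (wf ar).

Definition eqE {S : Type} (isac : S -> Prop) (n : nat)
  (R : nat -> term S * term S -> Prop) : relation (term S) :=
  clos_refl_sym_trans _
    (fun s t => ctx (rule_inst (RE n R)) s t \/ ctx (ac_ax isac) s t).

Definition valid_vE {S : Type} (ar : S -> nat) (isac : S -> Prop) (n : nat)
  (R : nat -> term S * term S -> Prop) (vE : term S -> nat) : Prop :=
  forall M N, ground M -> ground N -> wf ar M -> wf ar N ->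
    (vE M = vE N <-> eqE isac n R M N).

Fixpoint absF {S : Type} (th : S -> nat) (i : nat) (vE : term S -> nat)
  (t : term S) : term S :=
  match t with
  | TName a => TName a
  | TApp f l =>
      if Nat.eqb (th f) i then TApp f (map (absF th i vE) l) else TVar (vE t)
  | _ => TVar (vE t)
  end.

Definition alien {S : Type} (th : S -> nat) (i : nat) (u : term S) : Prop :=
  match u with TApp f _ => th f <> i | _ => True end.

Definition quasi {S : Type} (th : S -> nat) (isac : S -> Prop) (n : nat)
  (R : nat -> term S * term S -> Prop) (i : nat) (M : term S) : Prop :=
  forall u, subterm u M -> alien th i u -> normal_mod isac (RE n R) u.

(** Send each variable [v_E(u)], [u] an alien subterm of [M] or [N],
    back to a chosen alien [u'] with [v_E(u') = v_E(u)].  Such [u] and [u'] are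
    [E]-equal [R_E]-normal forms, hence equal modulo AC by confluence, so the
    resulting substitution [σ] gives [σ(F(M)) =AC M] and [σ(F(N)) =AC N]; as
    rewriting modulo AC is stable under substitution, [σ] maps the derivation
    [F(M) ->* F(N)] to [M ->* N].
    Confluence of [R_E] is only assumed on well-formed terms while an
    [E]-equality chain may pass through ill-formed ones; replacing every
    ill-formed subterm by a name ([wf_trunc]) maps such a chain to a chain of
    [R_E]/AC steps between well-formed terms. *)

From Stdlib Require Import List Relations Arith.
From Stdlib Require Import ClassicalEpsilon.
Import ListNotations.
Set Implicit Arguments.

Section Terms.
Context {S : Type}.
Implicit Types (s t u : term S) (P : S -> Prop) (Rr : term S * term S -> Prop).

Definition term_ind_nested (Q : term S -> Prop)
  (Hn : forall a, Q (TName a)) (Hv : forall x, Q (TVar x))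
  (Hc : forall c l, Forall Q l -> Q (TCon c l))
  (Ha : forall f l, Forall Q l -> Q (TApp f l)) : forall t, Q t :=
  fix F t := match t with
  | TName a => Hn a
  | TVar x => Hv x
  | TCon c l => Hc c l ((fix G l := match l as l0 return Forall Q l0 with
        | nil => Forall_nil Q
        | x :: l' => @Forall_cons _ Q x l' (F x) (G l') end) l)
  | TApp f l => Ha f l ((fix G l := match l as l0 return Forall Q l0 with
        | nil => Forall_nil Q
        | x :: l' => @Forall_cons _ Q x l' (F x) (G l') end) l)
  end.

Lemma map_ext_Forall {A B : Type} (f g : A -> B) l :
  Forall (fun x => f x = g x) l -> map f l = map g l.
Proof. induction 1; simpl; f_equal; auto. Qed.

Lemma subterm_trans s t u : subterm s t -> subterm t u -> subterm s u.
Proof. intros Hst Htu; induction Htu; [auto | econstructor; eauto | econstructor; eauto]. Qed.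

Lemma subterm_arg t l :
  In t l -> (forall c, subterm t (TCon c l)) /\ (forall f, subterm t (TApp f l)).
Proof. split; intros; econstructor; eauto; constructor. Qed.

Lemma ground_subterm s t : ground t -> subterm s t -> ground s.
Proof. intros Hg Hs x Hx; apply (Hg x); eapply subterm_trans; eauto. Qed.

Lemma ac_ax_sym P s t : ac_ax P s t -> ac_ax P t s.
Proof.
  intros (f&a&b&c&Hf&[[-> ->]|[[-> ->]|[-> ->]]]);
    [exists f, a, b, c | exists f, a, b, c | exists f, b, a, c]; auto.
Qed.

Lemma ctx_sym (r : relation (term S)) :
  (forall s t, r s t -> r t s) -> forall s t, ctx r s t -> ctx r t s.
Proof. intros Hr s t H; induction H; [apply ctx_root | apply ctx_con | apply ctx_app]; auto. Qed.

Lemma ac_eq_sym P s t : ac_eq P s t -> ac_eq P t s.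
Proof.
  induction 1; [apply rt_step, ctx_sym; [apply ac_ax_sym | auto] | apply rt_refl |].
  eapply rt_trans; eauto.
Qed.

Lemma ac_eq_rstar_mod P Rr s t : ac_eq P s t -> rstar_mod P Rr s t.
Proof. intro; apply rt_step; right; auto. Qed.

Lemma normal_mod_ac_eq P Rr s t :
  normal_mod P Rr s -> ac_eq P s t -> normal_mod P Rr t.
Proof.
  intros Hn Hst u (s'&t'&H1&H2&H3); apply (Hn u).
  exists s', t'; split; [eapply rt_trans; eauto | auto].
Qed.

Lemma rstar_mod_normal P Rr s t :
  rstar_mod P Rr s t -> normal_mod P Rr s -> ac_eq P s t.
Proof.
  induction 1 as [s t [H|H]| | s u t _ IH1 _ IH2]; intros Hn.
  - exfalso; exact (Hn t H).
  - exact H.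
  - apply rt_refl.
  - assert (Hsu : ac_eq P s u) by auto.
    eapply rt_trans; [exact Hsu | apply IH2; eapply normal_mod_ac_eq; eauto].
Qed.

Definition ctx_closed (C : term S -> term S) : Prop :=
  forall r s t, ctx r s t -> ctx r (C s) (C t).

Lemma ctx_closed_con c l1 l2 : ctx_closed (fun x => TCon c (l1 ++ x :: l2)).
Proof. intros r s t; apply ctx_con. Qed.

Lemma ctx_closed_app f l1 l2 : ctx_closed (fun x => TApp f (l1 ++ x :: l2)).
Proof. intros r s t; apply ctx_app. Qed.

Lemma ac_eq_ctx_closed P C s t : ctx_closed C -> ac_eq P s t -> ac_eq P (C s) (C t).
Proof. intros HC; induction 1; [apply rt_step; auto | apply rt_refl | eapply rt_trans; eauto]. Qed.

Lemma rstar_mod_ctx_closed P Rr C s t :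
  ctx_closed C -> rstar_mod P Rr s t -> rstar_mod P Rr (C s) (C t).
Proof.
  intros HC; induction 1 as [s t [H|H]| |]; [| | apply rt_refl | eapply rt_trans; eauto].
  - destruct H as (s'&t'&H1&H2&H3); apply rt_step; left.
    exists (C s'), (C t'); split; [|split]; auto; apply ac_eq_ctx_closed; auto.
  - apply rt_step; right; apply ac_eq_ctx_closed; auto.
Qed.

Lemma ac_eq_map_args P f (g : term S -> term S) l :
  (forall x, In x l -> ac_eq P (g x) x) -> ac_eq P (TApp f (map g l)) (TApp f l).
Proof.
  intros Hg.
  enough (Hpre : forall pre, ac_eq P (TApp f (pre ++ map g l)) (TApp f (pre ++ l)))
    by exact (Hpre nil).
  induction l as [|a l IH]; intros pre; simpl; [apply rt_refl|].
  eapply rt_trans.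
  - apply (@ac_eq_ctx_closed P (fun x => TApp f (pre ++ x :: map g l)));
      [apply ctx_closed_app | apply Hg; left; auto].
  - replace (pre ++ a :: map g l) with ((pre ++ [a]) ++ map g l)
      by (rewrite <- app_assoc; reflexivity).
    replace (pre ++ a :: l) with ((pre ++ [a]) ++ l)
      by (rewrite <- app_assoc; reflexivity).
    apply IH; intros; apply Hg; right; auto.
Qed.

Lemma subst_var t : subst TVar t = t.
Proof.
  induction t using term_ind_nested; simpl; auto; f_equal;
    rewrite <- (map_id l) at 2; apply map_ext_Forall; auto.
Qed.

Lemma subst_subst (sg tau : nat -> term S) t :
  subst tau (subst sg t) = subst (fun x => subst tau (sg x)) t.
Proof.
  induction t using term_ind_nested; simpl; auto; f_equal; rewrite map_map;
    apply map_ext_Forall; auto.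
Qed.

Lemma ctx_subst (r : relation (term S)) tau :
  (forall s t, r s t -> r (subst tau s) (subst tau t)) ->
  forall s t, ctx r s t -> ctx r (subst tau s) (subst tau t).
Proof.
  intros Hr s t H; induction H; simpl; rewrite ?map_app; simpl;
    [apply ctx_root | apply ctx_con | apply ctx_app]; auto.
Qed.

Lemma ac_ax_subst P tau s t : ac_ax P s t -> ac_ax P (subst tau s) (subst tau t).
Proof.
  intros (f&a&b&c&Hf&Hst); exists f, (subst tau a), (subst tau b), (subst tau c).
  split; auto; destruct Hst as [[-> ->]|[[-> ->]|[-> ->]]]; auto.
Qed.

Lemma ac_eq_subst P tau s t : ac_eq P s t -> ac_eq P (subst tau s) (subst tau t).
Proof.
  induction 1; [apply rt_step | apply rt_refl | eapply rt_trans; eauto].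
  apply ctx_subst; [apply ac_ax_subst | auto].
Qed.

Lemma rstar_mod_subst P Rr tau s t :
  rstar_mod P Rr s t -> rstar_mod P Rr (subst tau s) (subst tau t).
Proof.
  induction 1 as [s t [H|H]| |]; [| | apply rt_refl | eapply rt_trans; eauto].
  - destruct H as (s'&t'&H1&H2&H3); apply rt_step; left.
    exists (subst tau s'), (subst tau t'); split; [|split]; try apply ac_eq_subst; auto.
    apply ctx_subst; auto.
    intros ? ? (l&r&sg&HR&->&->); exists l, r, (fun x => subst tau (sg x)).
    rewrite !subst_subst; auto.
  - apply rt_step; right; apply ac_eq_subst; auto.
Qed.

Section Truncation.
Variable ar : S -> nat.

Lemma wf_subterm s t : wf ar t -> subterm s t -> wf ar s.
Proof. intros H Hs u Hu; apply H; eapply subterm_trans; eauto. Qed.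

Lemma wf_con c l :
  length l = carity c -> (forall x, In x l -> wf ar x) -> wf ar (TCon c l).
Proof. intros Hl Hx u Hu; inversion Hu; subst; [exact Hl | eapply Hx; eauto]. Qed.

Lemma wf_app f l :
  length l = ar f -> (forall x, In x l -> wf ar x) -> wf ar (TApp f l).
Proof. intros Hl Hx u Hu; inversion Hu; subst; [exact Hl | eapply Hx; eauto]. Qed.

Lemma wf_name a : wf ar (TName a).
Proof. intros u Hu; inversion Hu; exact I. Qed.

Lemma wf_var x : wf ar (TVar x).
Proof. intros u Hu; inversion Hu; exact I. Qed.

Fixpoint wf_trunc (t : term S) : term S :=
  match t with
  | TName a => TName a
  | TVar x => TVar x
  | TCon c l =>
      if Nat.eqb (length l) (carity c) then TCon c (map wf_trunc l) else TName 0
  | TApp f l =>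
      if Nat.eqb (length l) (ar f) then TApp f (map wf_trunc l) else TName 0
  end.

Lemma wf_wf_trunc t : wf ar (wf_trunc t).
Proof.
  induction t as [a|x|c l IH|f l IH] using term_ind_nested; simpl;
    [apply wf_name | apply wf_var | destruct (Nat.eqb_spec (length l) (carity c))
    | destruct (Nat.eqb_spec (length l) (ar f))]; try apply wf_name;
    [apply wf_con | apply wf_app]; rewrite ?length_map; auto;
    intros x Hx; apply in_map_iff in Hx as (y&<-&Hy); rewrite Forall_forall in IH; auto.
Qed.

Lemma wf_trunc_subst sg t :
  wf ar t -> wf_trunc (subst sg t) = subst (fun x => wf_trunc (sg x)) t.
Proof.
  induction t as [a|x|c l IH|f l IH] using term_ind_nested; intros Hw; simpl; auto;
    [assert (Hl : length l = carity c) | assert (Hl : length l = ar f)];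
    try exact (Hw _ (sub_refl _));
    rewrite length_map, Hl, Nat.eqb_refl, map_map; f_equal; apply map_ext_Forall;
    rewrite Forall_forall in *; intros x Hx;
    apply IH; auto; eapply wf_subterm; eauto; apply subterm_arg; auto.
Qed.

Lemma wf_trunc_id t : wf ar t -> wf_trunc t = t.
Proof.
  intros Hw; rewrite <- (subst_var t) at 1; rewrite wf_trunc_subst by exact Hw.
  apply subst_var.
Qed.

Lemma wf_trunc_ctx (r Q : relation (term S)) :
  (forall s, Q s s) ->
  (forall C s t, ctx_closed C -> Q s t -> Q (C s) (C t)) ->
  (forall s t, r s t -> Q (wf_trunc s) (wf_trunc t)) ->
  forall s t, ctx r s t -> Q (wf_trunc s) (wf_trunc t).
Proof.
  intros Qrefl Qctx Qroot s t H.
  induction H as [s t H | c l1 s t l2 _ IH | f l1 s t l2 _ IH]; auto; simpl;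
    rewrite !length_app; simpl; [destruct (_ =? carity c) | destruct (_ =? ar f)];
    auto; rewrite !map_app; simpl;
    [apply (Qctx (fun x => TCon c (map wf_trunc l1 ++ x :: map wf_trunc l2)))
    | apply (Qctx (fun x => TApp f (map wf_trunc l1 ++ x :: map wf_trunc l2)))];
    auto using ctx_closed_con, ctx_closed_app.
Qed.

Lemma wf_trunc_rule_step P Rr :
  (forall l r, Rr (l, r) -> wf ar l /\ wf ar r) ->
  forall s t, ctx (rule_inst Rr) s t -> rstar_mod P Rr (wf_trunc s) (wf_trunc t).
Proof.
  intros HR; apply wf_trunc_ctx; [intro; apply rt_refl | intros; apply rstar_mod_ctx_closed; auto|].
  intros ? ? (l&r&sg&Hlr&->&->); destruct (HR _ _ Hlr) as [Hl Hr].
  rewrite !wf_trunc_subst by assumption; apply rt_step; left.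
  eexists; eexists; split; [apply rt_refl | split; [apply ctx_root | apply rt_refl]].
  exists l, r, (fun x => wf_trunc (sg x)); auto.
Qed.

Lemma wf_trunc_ac_step P :
  (forall f, P f -> ar f = 2) ->
  forall s t, ctx (ac_ax P) s t -> ac_eq P (wf_trunc s) (wf_trunc t).
Proof.
  intros HP; apply wf_trunc_ctx; [intro; apply rt_refl | intros; apply ac_eq_ctx_closed; auto|].
  intros ? ? (f&a&b&c&Hf&H); apply rt_step, ctx_root.
  exists f, (wf_trunc a), (wf_trunc b), (wf_trunc c); split; [exact Hf|].
  destruct H as [[-> ->]|[[-> ->]|[-> ->]]]; simpl; rewrite (HP f Hf); simpl; auto.
Qed.

End Truncation.

Section Convertibility.
Variables (ar : S -> nat) (P : S -> Prop) (Rr : term S * term S -> Prop).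
Hypothesis ac_arity : forall f, P f -> ar f = 2.
Hypothesis rules_wf : forall l r, Rr (l, r) -> wf ar l /\ wf ar r.
Hypothesis confluent_on_wf : forall t u v, wf ar t ->
  rstar_mod P Rr t u -> rstar_mod P Rr t v ->
  exists w1 w2, rstar_mod P Rr u w1 /\ rstar_mod P Rr v w2 /\ ac_eq P w1 w2.

Lemma convertible_wf_trunc_joinable s t :
  clos_refl_sym_trans _ (fun s t => ctx (rule_inst Rr) s t \/ ctx (ac_ax P) s t) s t ->
  exists w, rstar_mod P Rr (wf_trunc ar s) w /\ rstar_mod P Rr (wf_trunc ar t) w.
Proof.
  induction 1 as [s t [H|H]| s | s t _ [w [H1 H2]] | s u t _ [w1 [H1 H2]] _ [w2 [H3 H4]]].
  - exists (wf_trunc ar t); split; [apply wf_trunc_rule_step | apply rt_refl]; auto.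
  - exists (wf_trunc ar t); split; [apply ac_eq_rstar_mod, wf_trunc_ac_step | apply rt_refl]; auto.
  - exists (wf_trunc ar s); split; apply rt_refl.
  - exists w; auto.
  - destruct (confluent_on_wf (wf_wf_trunc ar u) H2 H3) as (p&q&H5&H6&H7).
    exists q; split; [|eapply rt_trans; eauto].
    eapply rt_trans; [exact H1|]; eapply rt_trans; [exact H5|].
    apply ac_eq_rstar_mod; exact H7.
Qed.

Lemma convertible_normal_ac_eq s t :
  wf ar s -> wf ar t -> normal_mod P Rr s -> normal_mod P Rr t ->
  clos_refl_sym_trans _ (fun s t => ctx (rule_inst Rr) s t \/ ctx (ac_ax P) s t) s t ->
  ac_eq P s t.
Proof.
  intros Hws Hwt Hns Hnt Hst.
  destruct (convertible_wf_trunc_joinable Hst) as (w&Hs&Ht).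
  rewrite wf_trunc_id in Hs, Ht by assumption.
  eapply rt_trans; [apply (rstar_mod_normal Hs Hns) | apply ac_eq_sym, (rstar_mod_normal Ht Hnt)].
Qed.

End Convertibility.

Section Representatives.
Variables (th : S -> nat) (i : nat) (vE : term S -> nat) (P : S -> Prop).
Variable G : term S -> Prop.
Hypothesis G_vE_ac_eq : forall u u', G u -> G u' -> vE u = vE u' -> ac_eq P u u'.

Definition rep (x : nat) : term S :=
  epsilon (inhabits (TVar x)) (fun u => G u /\ vE u = x).

Lemma rep_ac_eq u : G u -> ac_eq P (rep (vE u)) u.
Proof.
  intros Hu; destruct (epsilon_spec (inhabits (TVar (vE u))) (fun v => G v /\ vE v = vE u))
    as [Hrep Heq]; [exists u; auto |].
  exact (G_vE_ac_eq Hrep Hu Heq).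
Qed.

Lemma subst_rep_absF X :
  ground X -> (forall u, subterm u X -> alien th i u -> G u) ->
  forall t, subterm t X -> ac_eq P (subst rep (absF th i vE t)) t.
Proof.
  intros HX HG t; induction t as [a|x|c l _|f l IH] using term_ind_nested; intros Ht.
  - apply rt_refl.
  - exfalso; exact (HX x Ht).
  - apply rep_ac_eq, HG; [exact Ht | exact I].
  - simpl; destruct (Nat.eqb_spec (th f) i) as [Hf|Hf]; [| apply rep_ac_eq, HG; auto].
    simpl; rewrite map_map; apply ac_eq_map_args; intros x Hx.
    rewrite Forall_forall in IH; apply IH; [exact Hx|].
    eapply subterm_trans; [apply subterm_arg; exact Hx | exact Ht].
Qed.

End Representatives.
End Terms.

Theorem proposition3 (S : Type) (ar th : S -> nat) (isac : S -> Prop) (n : nat)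
  (R : nat -> term S * term S -> Prop) (vE : term S -> nat) (i : nat)
  (M N : term S) :
  disjoint_combination ar th isac n R ->
  valid_vE ar isac n R vE ->
  i < n ->
  ground M -> ground N -> wf ar M -> wf ar N ->
  quasi th isac n R i M -> quasi th isac n R i N ->
  rstar_mod isac (RE n R) (absF th i vE M) (absF th i vE N) ->
  rstar_mod isac (RE n R) M N.
Proof.
  intros (_&ac_arity&_&rules&_&_&confluent) HvE _ gM gN wM wN qM qN Hder.
  assert (rules_wf : forall l r, RE n R (l, r) -> wf ar l /\ wf ar r).
  { intros l r (j&_&Hlr); destruct (rules j _ Hlr) as (_&Hl&Hr&_); auto. }
  set (G := fun u => (subterm u M \/ subterm u N) /\ alien th i u).
  assert (HG : forall u, G u -> ground u /\ wf ar u /\ normal_mod isac (RE n R) u).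
  { intros u [[Hu|Hu] Ha]; eauto 6 using ground_subterm, wf_subterm. }
  assert (G_vE_ac_eq : forall u u', G u -> G u' -> vE u = vE u' -> ac_eq isac u u').
  { intros u u' Hu Hu' Heq.
    destruct (HG u Hu) as (gu&wu&nu), (HG u' Hu') as (gu'&wu'&nu').
    apply (convertible_normal_ac_eq ac_arity rules_wf confluent); auto.
    apply HvE; auto. }
  eapply rt_trans; [apply ac_eq_rstar_mod, ac_eq_sym | eapply rt_trans].
  - apply (subst_rep_absF th i vE _ G_vE_ac_eq gM); [intros; split; auto | apply sub_refl].
  - apply rstar_mod_subst, Hder.
  - apply ac_eq_rstar_mod, (subst_rep_absF th i vE _ G_vE_ac_eq gN);
      [intros; split; auto | apply sub_refl].
Qed.
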